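(* Let $X=(X_1,\ldots,X_n)$ be a random vector with finitely many values, $Y$ a random variable with finitely many values (each with positive probability), and $L$ any partition lattice of $[n]$ with Möbius function $\mathfrak{m}$. If $X_1,\ldots,X_n$ are jointly independent given $Y$, then $$\ell_{1\cdots n}=\sum_{\pi\in L}\mathfrak{m}(\pi,[n])\prod_{B\in\pi}\mathbb{E}\Big[\prod_{i\in B}\mu_i^Y\Big],$$ i.e. $\ell_{1\cdots n}$ equals the $L$-cumulant of the random vector $(\mu_1^Y,\ldots,\mu_n^Y)$.
   Context: A partition lattice of $[n]$ is a subset of the set of set partitions of $[n]$ containing $[n]$ and $1|2|\cdots|n$ which is a lattice under refinement. $\mu_B=\mathbb{E}[\prod_{i\in B}X_i]$; $\ell_{1\cdots n}=\sum_{\pi\in L}\mathfrak{m}(\pi,[n])\prod_{B\in\pi}\mu_B$. $\mu_i^Y$ is the random variable $y\mapsto\mathbb{E}[X_i\mid Y=y]$. *)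

From HB Require Import structures.
From mathcomp Require Import all_boot all_order all_algebra.
Set Implicit Arguments. Unset Strict Implicit. Unset Printing Implicit Defensive.
Import Order.TTheory GRing.Theory Num.Theory.
Local Open Scope ring_scope.

Definition refines (n : nat) (P Q : {set {set 'I_n}}) : bool :=
  [forall B in P, [exists C in Q, B \subset C]].

Definition top_part (n : nat) : {set {set 'I_n}} := [set [set: 'I_n]].
Definition bot_part (n : nat) : {set {set 'I_n}} := [set [set i] | i : 'I_n].

Definition is_lub (n : nat) (L : {set {set {set 'I_n}}}) (P Q J : {set {set 'I_n}}) :=
  [/\ refines P J, refines Q J &
      forall K, K \in L -> refines P K -> refines Q K -> refines J K].

Definition is_glb (n : nat) (L : {set {set {set 'I_n}}}) (P Q M : {set {set 'I_n}}) :=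
  [/\ refines M P, refines M Q &
      forall K, K \in L -> refines K P -> refines K Q -> refines K M].

Definition is_partition_lattice (n : nat) (L : {set {set {set 'I_n}}}) : Prop :=
  [/\ forall P, P \in L -> partition P [set: 'I_n],
      top_part n \in L,
      bot_part n \in L,
      forall P Q, P \in L -> Q \in L -> exists2 J, J \in L & is_lub L P Q J &
      forall P Q, P \in L -> Q \in L -> exists2 M, M \in L & is_glb L P Q M].

(* Moebius function of the poset (L, refines), by the usual recursion
   m(P,P) = 1, m(P,Q) = - sum_{P <= T < Q} m(P,T) for P < Q, 0 otherwise.
   The recursion depth is bounded by #|L|, used as fuel. *)
Fixpoint mobius_fuel (R : nzRingType) (n : nat) (L : {set {set {set 'I_n}}})
    (k : nat) (P Q : {set {set 'I_n}}) : R :=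
  if P == Q then 1 else
  match k with
  | 0 => 0
  | k'.+1 =>
      if refines P Q then
        - \sum_(T in L | [&& refines P T, T != Q & refines T Q])
            mobius_fuel R L k' P T
      else 0
  end.

Definition mobius (R : nzRingType) (n : nat) (L : {set {set {set 'I_n}}})
    (P Q : {set {set 'I_n}}) : R :=
  mobius_fuel R L #|L| P Q.

Definition Ex (Omega : finType) (R : nzRingType) (p : Omega -> R) (Z : Omega -> R) : R :=
  \sum_w p w * Z w.

Definition PrY (Omega : finType) (R : nzRingType) (T : eqType) (p : Omega -> R)
    (Y : Omega -> T) (y : T) : R :=
  \sum_(w | Y w == y) p w.

Definition condE (Omega : finType) (R : fieldType) (T : eqType) (p : Omega -> R)
    (Y : Omega -> T) (Z : Omega -> R) (y : T) : R :=
  (\sum_(w | Y w == y) p w * Z w) / PrY p Y y.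

Definition condPr (Omega : finType) (R : fieldType) (T : eqType) (p : Omega -> R)
    (Y : Omega -> T) (A : pred Omega) (y : T) : R :=
  condE p Y (fun w => (A w)%:R) y.

Definition cond_indep (Omega : finType) (R : numFieldType) (T : eqType) (n : nat)
    (p : Omega -> R) (X : 'I_n -> Omega -> R) (Y : Omega -> T) : Prop :=
  forall y : T, 0 < PrY p Y y -> forall x : 'I_n -> R,
    condPr p Y (fun w => [forall i, X i w == x i]) y
    = \prod_(i < n) condPr p Y (fun w => X i w == x i) y.

Definition moment (Omega : finType) (R : nzRingType) (n : nat) (p : Omega -> R)
    (X : 'I_n -> Omega -> R) (B : {set 'I_n}) : R :=
  Ex p (fun w => \prod_(i in B) X i w).

Definition L_cumulant (Omega : finType) (R : nzRingType) (n : nat)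
    (L : {set {set {set 'I_n}}}) (p : Omega -> R) (X : 'I_n -> Omega -> R) : R :=
  \sum_(P in L) mobius R L P (top_part n) * \prod_(B in P) moment p X B.

(* Conditioning on Y leaves every moment unchanged in expectation (tower
   property), and given Y = y the X_i are independent, so the conditional
   moment E[prod_{i in B} X_i | Y] factors as prod_{i in B} mu_i^Y.  Hence
   mu_B = E[prod_{i in B} mu_i^Y] for every block B, and the two L-cumulants
   agree term by term, whatever the lattice L and its Moebius function. *)
From HB Require Import structures.
From mathcomp Require Import all_boot all_order all_algebra.
Set Implicit Arguments. Unset Strict Implicit. Unset Printing Implicit Defensive.
Import Order.TTheory GRing.Theory Num.Theory.
Local Open Scope ring_scope.

Section Independence.

Variables (R : comNzRingType) (Omega : finType) (n : nat).
Variables (q : Omega -> R) (X : 'I_n -> Omega -> R).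

Definition indep : Prop :=
  forall x : 'I_n -> R,
    Ex q (fun w => [forall i, X i w == x i]%:R)
    = \prod_i Ex q (fun w => (X i w == x i)%:R).

Lemma sum_seq_sub_indicator (s : seq R) (h : R -> R) (x : R) : x \in s ->
  h x = \sum_(v : seq_sub s) h (ssval v) * (x == ssval v)%:R.
Proof.
move=> xs; rewrite (bigD1 (SeqSub xs)) //= eqxx mulr1 big1 ?addr0 // => v.
by rewrite -val_eqE /= eq_sym => /negbTE ->; rewrite mulr0.
Qed.

Lemma prod_natr_bool (I : finType) (b : pred I) :
  \prod_i (b i)%:R = [forall i, b i]%:R :> R.
Proof.
case: (boolP [forall i, b i]) => [/forallP b_all | /forallPn [i /negbTE bi0]].
  by rewrite big1 // => i _; rewrite b_all.
by rewrite (bigD1 i) //= bi0 mul0r.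
Qed.

Hypothesis X_indep : indep.

(* Expanding each h_i (X_i w) over the finitely many values taken by the X_i
   reduces the claim to the factorization of the joint pmf. *)
Lemma Ex_prod_indep (h : 'I_n -> R -> R) :
  Ex q (fun w => \prod_i h i (X i w)) = \prod_i Ex q (fun w => h i (X i w)).
Proof.
pose S := codom (fun iw : 'I_n * Omega => X iw.1 iw.2).
have XS i w : X i w \in S by exact: (codom_f _ (i, w)).
pose x (f : {ffun 'I_n -> seq_sub S}) i := ssval (f i).
have expand i w :
    h i (X i w) = \sum_(v : seq_sub S) h i (ssval v) * (X i w == ssval v)%:R.
  exact: sum_seq_sub_indicator (XS i w).
have joint w : \prod_i h i (X i w)
    = \sum_f (\prod_i h i (x f i)) * [forall i, X i w == x f i]%:R.
  rewrite (eq_bigr _ (fun i _ => expand i w)) bigA_distr_bigA /=.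
  apply: eq_bigr => f _; rewrite big_split /=; congr (_ * _).
  exact: prod_natr_bool.
transitivity (\sum_(f : {ffun 'I_n -> seq_sub S})
    \prod_i (h i (x f i) * Ex q (fun w => (X i w == x f i)%:R))).
  rewrite /Ex (eq_bigr _ (fun w _ => congr1 _ (joint w))).
  under eq_bigr do rewrite mulr_sumr.
  rewrite exchange_big /=; apply: eq_bigr => f _.
  rewrite big_split /= -X_indep /Ex mulr_sumr; apply: eq_bigr => w _.
  by rewrite mulrCA.
pose g i (v : seq_sub S) := h i (ssval v) * Ex q (fun w => (X i w == ssval v)%:R).
rewrite -(bigA_distr_bigA g) /=; apply: eq_bigr => i _.
rewrite /Ex (eq_bigr _ (fun w _ => congr1 _ (expand i w))).
under [RHS]eq_bigr do rewrite mulr_sumr.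
rewrite [RHS]exchange_big /=; apply: eq_bigr => v _.
by rewrite /g /Ex mulr_sumr; apply: eq_bigr => w _; rewrite mulrCA.
Qed.

Lemma Ex_prod_in_indep (B : {set 'I_n}) : \sum_w q w = 1 ->
  Ex q (fun w => \prod_(i in B) X i w) = \prod_(i in B) Ex q (X i).
Proof.
move=> q1.
transitivity (Ex q (fun w => \prod_i (if i \in B then X i w else 1))).
  by apply: eq_bigr => w _; rewrite big_mkcond.
rewrite (Ex_prod_indep (fun i r => if i \in B then r else 1)) [RHS]big_mkcond.
apply: eq_bigr => i _; case: (i \in B) => //.
by rewrite /Ex -[RHS]q1; apply: eq_bigr => w _; rewrite mulr1.
Qed.

End Independence.

Section Conditioning.

Variables (R : fieldType) (Omega : finType) (T : eqType).
Variables (p : Omega -> R) (Y : Omega -> T).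

Definition cond_weight (y : T) (w : Omega) : R :=
  p w * (Y w == y)%:R / PrY p Y y.

Lemma condE_Ex (Z : Omega -> R) (y : T) :
  condE p Y Z y = Ex (cond_weight y) Z.
Proof.
rewrite /condE /Ex big_mkcond /= mulr_suml; apply: eq_bigr => w _.
by rewrite /cond_weight; case: (Y w == y); rewrite ?mulr1 ?mulr0 ?mul0r // mulrAC.
Qed.

Lemma sum_cond_weight (y : T) : PrY p Y y != 0 -> \sum_w cond_weight y w = 1.
Proof.
move=> PrY_neq0; rewrite -mulr_suml -[X in X / _](_ : PrY p Y y = _) ?divff //.
rewrite /PrY big_mkcond /=; apply: eq_bigr => w _.
by case: (Y w == y); rewrite ?mulr1 ?mulr0.
Qed.

Hypothesis PrY_neq0 : forall w, PrY p Y (Y w) != 0.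

Lemma Ex_condE (Z : Omega -> R) : Ex p Z = Ex p (fun w => condE p Y Z (Y w)).
Proof.
transitivity (\sum_w \sum_v (cond_weight (Y w) v) * (p w * Z w)).
  by apply: eq_bigr => w _; rewrite -mulr_suml sum_cond_weight ?mul1r.
rewrite exchange_big /=; apply: eq_bigr => v _.
rewrite condE_Ex /Ex mulr_sumr; apply: eq_bigr => w _.
rewrite /cond_weight eq_sym.
by case: eqP => [->|_]; rewrite ?(mulr1, mulr0, mul0r) // !mulrA (mulrAC (p v)).
Qed.

End Conditioning.

Lemma moment_cond_indep (R : numFieldType) (Omega : finType) (T : eqType)
    (n : nat) (p : Omega -> R) (X : 'I_n -> Omega -> R) (Y : Omega -> T)
    (B : {set 'I_n}) :
  (forall w, 0 < PrY p Y (Y w)) -> cond_indep p X Y ->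
  moment p X B = Ex p (fun w => \prod_(i in B) condE p Y (X i) (Y w)).
Proof.
move=> PrY_gt0 X_cond_indep.
have PrY_neq0 w : PrY p Y (Y w) != 0 by rewrite gt_eqF.
rewrite /moment (Ex_condE PrY_neq0); apply: eq_bigr => w _; congr (_ * _).
have X_indep : indep (cond_weight p Y (Y w)) X.
  move=> x; have := X_cond_indep (Y w) (PrY_gt0 w) x.
  by rewrite /condPr condE_Ex => ->; apply: eq_bigr => i _; rewrite condE_Ex.
rewrite condE_Ex Ex_prod_in_indep ?sum_cond_weight //.
by apply: eq_bigr => i _; rewrite condE_Ex.
Qed.

Theorem proposition5p9 (R : realFieldType) (n : nat) (L : {set {set {set 'I_n}}})
    (Omega : finType) (T : eqType) (p : Omega -> R)
    (X : 'I_n -> Omega -> R) (Y : Omega -> T) :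
  (forall w, 0 <= p w) ->
  \sum_w p w = 1 ->
  (forall w, 0 < PrY p Y (Y w)) ->
  is_partition_lattice L ->
  cond_indep p X Y ->
  L_cumulant L p X =
  \sum_(P in L) mobius R L P (top_part n) *
     \prod_(B in P) Ex p (fun w => \prod_(i in B) condE p Y (X i) (Y w)).
Proof.
move=> _ _ PrY_gt0 _ X_cond_indep.
apply: eq_bigr => P _; congr (_ * _); apply: eq_bigr => B _.
exact: moment_cond_indep.
Qed.
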